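(* Let $f$ be a convex function on $\mathbb{R}^m$ and let $C,C'\subset\mathbb{R}^m$ be open convex sets such that $f|_C$ and $f|_{C'}$ are affine. Suppose $v\in\operatorname{recc}(C)\cap\operatorname{recc}(C')$. Then $\nabla_vf(x)=\nabla_vf(x')$ for all $x\in C$, $x'\in C'$, where $\nabla_v$ denotes the directional derivative in direction $v$.
   Context: $\operatorname{recc}(S)=\{v\in\mathbb{R}^m:\forall x\in S,\ x+v\in S\}$ is the recession cone of a convex set $S$. *)

From Stdlib Require Import Reals Lra.
From Stdlib Require Fin.
Open Scope R_scope.

Definition vec (m : nat) := Fin.t m -> R.

Definition vadd {m} (x y : vec m) : vec m := fun i => x i + y i.
Definition vscale {m} (c : R) (x : vec m) : vec m := fun i => c * x i.

Definition convex_vset {m} (C : vec m -> Prop) : Prop :=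
  forall x y t, C x -> C y -> 0 <= t <= 1 ->
    C (vadd (vscale (1 - t) x) (vscale t y)).

(* Open set (product / sup-norm topology, equal to the Euclidean one) *)
Definition open_vset {m} (C : vec m -> Prop) : Prop :=
  forall x, C x -> exists eps, 0 < eps /\
    forall y, (forall i, Rabs (y i - x i) < eps) -> C y.

Definition convex_fun {m} (f : vec m -> R) : Prop :=
  forall x y t, 0 <= t <= 1 ->
    f (vadd (vscale (1 - t) x) (vscale t y)) <= (1 - t) * f x + t * f y.

Definition affine_on {m} (f : vec m -> R) (C : vec m -> Prop) : Prop :=
  exists (L : vec m -> R) (b : R),
    (forall x y, L (vadd x y) = L x + L y) /\
    (forall c x, L (vscale c x) = c * L x) /\
    (forall x, C x -> f x = L x + b).

Definition recc {m} (S : vec m -> Prop) (v : vec m) : Prop :=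
  forall x, S x -> S (vadd x v).

Definition dir_deriv {m} (f : vec m -> R) (x v : vec m) (l : R) : Prop :=
  derivable_pt_lim (fun t => f (vadd x (vscale t v))) 0 l.

(* Along the ray x + t v inside C, f is affine in t with slope L v, where L is the
   linear part of f on C; since C is open, this slope is the directional derivative.
   For two such rays the slopes agree: if the slope a along the C-ray exceeded the
   slope a' along the C'-ray, convexity at the midpoint x + n v of
   w = 2x - x' and x' + 2n v would give n (a - a') <= const for all n. *)
From Stdlib Require Import Reals Lra FunctionalExtensionality.
From Stdlib Require Fin.
Open Scope R_scope.

Ltac vec_ext := apply functional_extensionality; intro; unfold vadd, vscale.

Lemma vec_norm_bound (m : nat) (v : vec m) : exists M, 0 < M /\ forall i, Rabs (v i) <= M.
Proof.
  induction m as [|m IH].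
  - exists 1. split; [lra|]. intros i. exact (Fin.case0 (fun _ => _) i).
  - destruct (IH (fun i => v (Fin.FS i))) as [M [HM0 HM]].
    exists (Rmax (Rabs (v Fin.F1)) M). split.
    + apply Rlt_le_trans with M; [lra | apply Rmax_r].
    + intros i. apply (Fin.caseS' i (fun i => Rabs (v i) <= Rmax (Rabs (v Fin.F1)) M)).
      * apply Rmax_l.
      * intros p. apply Rle_trans with M; [apply HM | apply Rmax_r].
Qed.

Lemma open_vset_line {m} (C : vec m -> Prop) (x v : vec m) :
  open_vset C -> C x ->
  exists d, 0 < d /\ forall t, Rabs t < d -> C (vadd x (vscale t v)).
Proof.
  intros Ho Hx.
  destruct (Ho x Hx) as [eps [Heps Hball]].
  destruct (vec_norm_bound m v) as [M [HM0 HM]].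
  exists (eps / M). split; [apply Rdiv_lt_0_compat; lra|].
  intros t Ht. apply Hball. intro i. unfold vadd, vscale.
  replace (x i + t * v i - x i) with (t * v i) by ring.
  rewrite Rabs_mult.
  apply Rle_lt_trans with (Rabs t * M).
  - apply Rmult_le_compat_l; [apply Rabs_pos | apply HM].
  - apply Rmult_lt_compat_r with (r := M) in Ht; [|lra].
    unfold Rdiv in Ht. rewrite Rmult_assoc, Rinv_l, Rmult_1_r in Ht; lra.
Qed.

Lemma recc_nat_scale {m} (C : vec m -> Prop) (x v : vec m) :
  recc C v -> C x -> forall n, C (vadd x (vscale (INR n) v)).
Proof.
  intros Hr Hx n. induction n as [|n IH].
  - replace (vadd x (vscale (INR 0) v)) with x; [exact Hx|].
    vec_ext. simpl. ring.
  - replace (vadd x (vscale (INR (S n)) v)) with (vadd (vadd x (vscale (INR n) v)) v).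
    + exact (Hr _ IH).
    + vec_ext. rewrite S_INR. ring.
Qed.

Section AffineOn.

Variables (m : nat) (f : vec m -> R) (C : vec m -> Prop) (L : vec m -> R) (b : R).
Hypothesis L_add : forall x y, L (vadd x y) = L x + L y.
Hypothesis L_scale : forall c x, L (vscale c x) = c * L x.
Hypothesis f_affine : forall x, C x -> f x = L x + b.

Lemma affine_on_line (x v : vec m) (t : R) :
  C (vadd x (vscale t v)) -> f (vadd x (vscale t v)) = (L x + b) + t * L v.
Proof. intros Ht. rewrite f_affine by exact Ht. rewrite L_add, L_scale. ring. Qed.

Lemma dir_deriv_affine_on (x v : vec m) :
  open_vset C -> C x -> dir_deriv f x v (L v).
Proof.
  intros Ho Hx.
  destruct (open_vset_line C x v Ho Hx) as [d [Hd Hline]].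
  intros e He. exists (mkposreal d Hd). simpl. intros h Hh0 Hh.
  assert (H0 : Rabs 0 < d) by (rewrite Rabs_R0; exact Hd).
  rewrite Rplus_0_l, (affine_on_line x v h (Hline h Hh)),
    (affine_on_line x v 0 (Hline 0 H0)).
  replace ((L x + b + h * L v - (L x + b + 0 * L v)) / h - L v) with 0 by (field; exact Hh0).
  rewrite Rabs_R0. exact He.
Qed.

End AffineOn.

Lemma convex_ray_slope_le {m} (f : vec m -> R) (x x' v : vec m) (c c' a a' : R) :
  convex_fun f ->
  (forall n, f (vadd x (vscale (INR n) v)) = c + INR n * a) ->
  (forall n, f (vadd x' (vscale (INR n) v)) = c' + INR n * a') ->
  a <= a'.
Proof.
  intros Hf Hray Hray'.
  set (w := vadd (vscale 2 x) (vscale (-1) x')).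
  assert (Hbound : forall n, INR n * (a - a') <= / 2 * f w + / 2 * c' - c).
  { intro n.
    pose proof (Hf w (vadd x' (vscale (INR (2 * n)) v)) (1 / 2) ltac:(lra)) as Hmid.
    replace (vadd (vscale (1 - 1 / 2) w) (vscale (1 / 2) (vadd x' (vscale (INR (2 * n)) v))))
      with (vadd x (vscale (INR n) v)) in Hmid.
    - rewrite Hray, Hray', mult_INR in Hmid. simpl in Hmid. lra.
    - vec_ext. unfold w, vadd, vscale. rewrite mult_INR. simpl. field. }
  destruct (Rle_dec a a') as [|Ha]; [assumption|].
  destruct (INR_archimed (a - a') (/ 2 * f w + / 2 * c' - c)) as [n Hn]; [lra|].
  specialize (Hbound n). lra.
Qed.

Theorem mainTheorem16 (m : nat) (f : vec m -> R) (C C' : vec m -> Prop) (v : vec m) :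
  convex_fun f ->
  open_vset C -> convex_vset C ->
  open_vset C' -> convex_vset C' ->
  affine_on f C -> affine_on f C' ->
  recc C v -> recc C' v ->
  forall x x', C x -> C' x' ->
    exists l, dir_deriv f x v l /\ dir_deriv f x' v l.
Proof.
  intros Hf Ho _ Ho' _ [L [b [Ladd [Lscale Hfaff]]]] [L' [b' [Ladd' [Lscale' Hfaff']]]]
    Hr Hr' x x' Hx Hx'.
  assert (Hray : forall n, f (vadd x (vscale (INR n) v)) = (L x + b) + INR n * L v)
    by (intro n; apply (affine_on_line m f C); auto; apply recc_nat_scale; auto).
  assert (Hray' : forall n, f (vadd x' (vscale (INR n) v)) = (L' x' + b') + INR n * L' v)
    by (intro n; apply (affine_on_line m f C'); auto; apply recc_nat_scale; auto).
  assert (Hslope : L v = L' v).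
  { apply Rle_antisym.
    - exact (convex_ray_slope_le f x x' v _ _ _ _ Hf Hray Hray').
    - exact (convex_ray_slope_le f x' x v _ _ _ _ Hf Hray' Hray). }
  exists (L v). split.
  - exact (dir_deriv_affine_on m f C L b Ladd Lscale Hfaff x v Ho Hx).
  - rewrite Hslope. exact (dir_deriv_affine_on m f C' L' b' Ladd' Lscale' Hfaff' x' v Ho' Hx').
Qed.
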